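(* Let $g>0$, $0<\rho_0<\rho_+$, $f,\hat f\in\mathbb{R}$, $k>0$, $a>0$, $r_0>0$, and let $c\neq 0$ satisfy $k^2c^2>f^2$. Let $m>0$ be defined by $$m^2=\frac{k^4c^2}{k^2c^2-f^2},$$ and set $$b=\frac{ma}{k},\qquad d=-\frac{fma}{k^2c}$$ (so that $ma-kb=0$, $kcd+bf=0$, $mkc^2b+mcdf=k^2c^2a$ and $b^2=a^2+d^2$). Let $s^*>0$ satisfy $m^2a^2e^{-2ms^*}<1$, and let $s^*\le s_0<s_+$. For labels $(q,r,s)\in\mathbb{R}\times[-r_0,r_0]\times[s_0,s_+]$ and time $t$, put $\theta=k(q-ct)$ and define particle positions $$x=q-be^{-ms}\sin\theta,\qquad y=r-de^{-ms}\cos\theta,\qquad z=s-ae^{-ms}\cos\theta .$$ Then: (i) the Jacobian determinant of $(q,r,s)\mapsto(x,y,z)$ equals $1-m^2a^2e^{-2ms}$, which is independent of $t$ and nonzero, so the flow is volume preserving (incompressible); (ii) the velocity field $(u,v,w)=\frac{D}{Dt}(x,y,z)=(kcbe^{-ms}\cos\theta,\,-kcde^{-ms}\sin\theta,\,-kcae^{-ms}\sin\theta)$ together with the pressure $$P=\tilde P_0-\rho_0\Big[-\tfrac12k^2c^2b^2e^{-2ms}+\tfrac12\hat f kcab\,e^{-2ms}-\tfrac12 fkcbd\,e^{-2ms}+(ca\hat f-cdf-kc^2b-ag)e^{-ms}\cos\theta+gs\Big]$$ (for any constant $\tilde P_0$) satisfies the $f$-plane Euler equations $$\tfrac{Du}{Dt}+\hat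 f w-fv=-\tfrac{1}{\rho_0}P_x,\quad \tfrac{Dv}{Dt}+fu=-\tfrac{1}{\rho_0}P_y,\quad \tfrac{Dw}{Dt}-\hat f u=-\tfrac{1}{\rho_0}P_z-g$$ in the region $\{s_0\le s\le s_+\}$; (iii) if moreover the pressure-continuity condition $$\rho_+ga=\rho_0\big(kc^2b+cdf-ca\hat f+ag\big)$$ holds, then for every constant $P_0$ the constant $\tilde P_0$ can be chosen so that $P=P_0-\rho_+gz$ on the surface $s=s_0$ (the thermocline), which is a material surface (so the kinematic condition holds there); and in this case $c$ satisfies the dispersion relation $$c^2(c^2k^2-f^2)=(c\hat f+\tilde g)^2,\qquad \tilde g=\frac{g(\rho_+-\rho_0)}{\rho_0}.$$
   Context: Setting: a fluid layer of constant density $\rho_0$ (lying above a motionless abyssal layer of constant density $\rho_+>\rho_0$, in which the pressure is hydrostatic, $P=P_0-\rho_+gz$) is described in a rotating frame with $x,y,z$ pointing east (longitude), north (latitude) and locally vertical. In the $f$-plane approximation the Coriolis parameters $f=2\Omega\sin\phi$ and $\hat f=2\Omega\cos\phi$ ($\Omega$ Earth's rotation rate, $\phi$ a fixed latitude) are treated as constants, and $g$ is gravitational acceleration. The flow is described in Lagrangian form: $(q,r,s)$ are particle labels, $D/Dt$ is the material (Lagrangian time) derivative at fixed labels, and $P_x,P_y,P_z$ are Eulerian partial derivatives of the pressure. The surface $s=s_0$ is the thermocline $z=\eta(x,y,t)$ separating the moving layer from the still layer below; the dynamic condition there is $P=P_0-\rho_+gz$ and the kinematic condition is $w=\eta_t+u\eta_x+v\eta_y$.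 *)

From Stdlib Require Import Reals Lra.
From Coquelicot Require Import Coquelicot.
Open Scope R_scope.

Definition theta (k c q t : R) : R := k * (q - c * t).

Definition xpos (k c m b : R) (q r s t : R) : R :=
  q - b * exp (- (m * s)) * sin (theta k c q t).
Definition ypos (k c m d : R) (q r s t : R) : R :=
  r - d * exp (- (m * s)) * cos (theta k c q t).
Definition zpos (k c m a : R) (q r s t : R) : R :=
  s - a * exp (- (m * s)) * cos (theta k c q t).

(* partial derivatives of a field F(q,r,s,t) w.r.t. labels and Lagrangian time
   (D/Dt = derivative in t at fixed labels) *)
Definition d_q (F : R -> R -> R -> R -> R) q r s t := Derive (fun q' => F q' r s t) q.
Definition d_r (F : R -> R -> R -> R -> R) q r s t := Derive (fun r' => F q r' s t) r.
Definition d_s (F : R -> R -> R -> R -> R) q r s t := Derive (fun s' => F q r s' t) s.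
Definition DDt (F : R -> R -> R -> R -> R) q r s t := Derive (fun t' => F q r s t') t.

Definition jacobian3 (X Y Z : R -> R -> R -> R -> R) q r s t : R :=
  let a11 := d_q X q r s t in let a12 := d_r X q r s t in let a13 := d_s X q r s t in
  let a21 := d_q Y q r s t in let a22 := d_r Y q r s t in let a23 := d_s Y q r s t in
  let a31 := d_q Z q r s t in let a32 := d_r Z q r s t in let a33 := d_s Z q r s t in
  a11 * (a22 * a33 - a23 * a32) - a12 * (a21 * a33 - a23 * a31)
  + a13 * (a21 * a32 - a22 * a31).

Definition pressure (rho0 g f fh k c a b d m Pt0 : R) (q r s t : R) : R :=
  Pt0 - rho0 * ( - (1/2) * k^2 * c^2 * b^2 * exp (- (2 * m * s))
                 + (1/2) * fh * k * c * a * b * exp (- (2 * m * s))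
                 - (1/2) * f * k * c * b * d * exp (- (2 * m * s))
                 + (c * a * fh - c * d * f - k * c^2 * b - a * g)
                     * exp (- (m * s)) * cos (theta k c q t)
                 + g * s).

(* (Gx,Gy,Gz) is the Eulerian gradient (P_x,P_y,P_z) of a field P given in
   Lagrangian form at label point (q,r,s,t): chain rule
   dP/dxi = P_x dx/dxi + P_y dy/dxi + P_z dz/dxi for xi = q, r, s.
   Since the Jacobian is nonzero, this determines (Gx,Gy,Gz) uniquely. *)
Definition eulerian_gradient (P X Y Z : R -> R -> R -> R -> R) q r s t
    (Gx Gy Gz : R) : Prop :=
  d_q P q r s t = Gx * d_q X q r s t + Gy * d_q Y q r s t + Gz * d_q Z q r s t /\
  d_r P q r s t = Gx * d_r X q r s t + Gy * d_r Y q r s t + Gz * d_r Z q r s t /\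
  d_s P q r s t = Gx * d_s X q r s t + Gy * d_s Y q r s t + Gz * d_s Z q r s t.

From Stdlib Require Import Reals Lra.
From Coquelicot Require Import Coquelicot.
Open Scope R_scope.

(* The flow is explicit, so every claim reduces to an exponential-trigonometric
   identity once the choice of m, b, d is traded for the four relations
   k b = m a, k c d + b f = 0, b^2 = a^2 + d^2 and m k c^2 b + m c d f = k^2 c^2 a.
   The Jacobian is then 1 - m^2 a^2 e^{-2ms} > 0, so the chain-rule system defining
   the Eulerian pressure gradient has a unique solution, and it suffices to exhibit
   one; the Euler equations are checked on that solution.  On s = s0 the
   pressure-continuity condition kills the cos(theta) term of P + rho_+ g z, and it
   also gives c fh + g~ = k^2 c^2 / m, whose square is the dispersion relation. *)

Ltac solve_closed_derive :=
  apply is_derive_unique; auto_derive; auto; unfold Rminus; ring.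

Lemma sin_cos_sq (x : R) : sin x ^ 2 + cos x ^ 2 = 1.
Proof. pose proof (sin2_cos2 x) as H. unfold Rsqr in H. lra. Qed.

Lemma exp_double (m s : R) : exp (- (2 * m * s)) = exp (- (m * s)) * exp (- (m * s)).
Proof. rewrite <- exp_plus. f_equal. ring. Qed.

Lemma DDt_xpos k c m b q r s t :
  DDt (xpos k c m b) q r s t = k * c * b * exp (- (m * s)) * cos (theta k c q t).
Proof. unfold DDt, xpos, theta. solve_closed_derive. Qed.

Lemma DDt_ypos k c m d q r s t :
  DDt (ypos k c m d) q r s t = - k * c * d * exp (- (m * s)) * sin (theta k c q t).
Proof. unfold DDt, ypos, theta. solve_closed_derive. Qed.

Lemma DDt_zpos k c m a q r s t :
  DDt (zpos k c m a) q r s t = - k * c * a * exp (- (m * s)) * sin (theta k c q t).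
Proof. unfold DDt, zpos, theta. solve_closed_derive. Qed.

Lemma DDt2_xpos k c m b q r s t :
  DDt (DDt (xpos k c m b)) q r s t = k^2 * c^2 * b * exp (- (m * s)) * sin (theta k c q t).
Proof.
  unfold DDt at 1. erewrite Derive_ext by (intro; apply DDt_xpos).
  unfold theta. solve_closed_derive.
Qed.

Lemma DDt2_ypos k c m d q r s t :
  DDt (DDt (ypos k c m d)) q r s t = k^2 * c^2 * d * exp (- (m * s)) * cos (theta k c q t).
Proof.
  unfold DDt at 1. erewrite Derive_ext by (intro; apply DDt_ypos).
  unfold theta. solve_closed_derive.
Qed.

Lemma DDt2_zpos k c m a q r s t :
  DDt (DDt (zpos k c m a)) q r s t = k^2 * c^2 * a * exp (- (m * s)) * cos (theta k c q t).
Proof.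
  unfold DDt at 1. erewrite Derive_ext by (intro; apply DDt_zpos).
  unfold theta. solve_closed_derive.
Qed.

Lemma d_q_xpos k c m b q r s t :
  d_q (xpos k c m b) q r s t = 1 - b * k * exp (- (m * s)) * cos (theta k c q t).
Proof. unfold d_q, xpos, theta. solve_closed_derive. Qed.

Lemma d_r_xpos k c m b q r s t : d_r (xpos k c m b) q r s t = 0.
Proof. unfold d_r, xpos, theta. solve_closed_derive. Qed.

Lemma d_s_xpos k c m b q r s t :
  d_s (xpos k c m b) q r s t = b * m * exp (- (m * s)) * sin (theta k c q t).
Proof. unfold d_s, xpos, theta. solve_closed_derive. Qed.

Lemma d_q_ypos k c m d q r s t :
  d_q (ypos k c m d) q r s t = d * k * exp (- (m * s)) * sin (theta k c q t).
Proof. unfold d_q, ypos, theta. solve_closed_derive. Qed.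

Lemma d_r_ypos k c m d q r s t : d_r (ypos k c m d) q r s t = 1.
Proof. unfold d_r, ypos, theta. solve_closed_derive. Qed.

Lemma d_s_ypos k c m d q r s t :
  d_s (ypos k c m d) q r s t = d * m * exp (- (m * s)) * cos (theta k c q t).
Proof. unfold d_s, ypos, theta. solve_closed_derive. Qed.

Lemma d_q_zpos k c m a q r s t :
  d_q (zpos k c m a) q r s t = a * k * exp (- (m * s)) * sin (theta k c q t).
Proof. unfold d_q, zpos, theta. solve_closed_derive. Qed.

Lemma d_r_zpos k c m a q r s t : d_r (zpos k c m a) q r s t = 0.
Proof. unfold d_r, zpos, theta. solve_closed_derive. Qed.

Lemma d_s_zpos k c m a q r s t :
  d_s (zpos k c m a) q r s t = 1 + a * m * exp (- (m * s)) * cos (theta k c q t).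
Proof. unfold d_s, zpos, theta. solve_closed_derive. Qed.

Lemma d_q_pressure rho0 g f fh k c a b d m Pt0 q r s t :
  d_q (pressure rho0 g f fh k c a b d m Pt0) q r s t =
  rho0 * (c * a * fh - c * d * f - k * c^2 * b - a * g) * k
    * exp (- (m * s)) * sin (theta k c q t).
Proof. unfold d_q, pressure, theta. solve_closed_derive. Qed.

Lemma d_r_pressure rho0 g f fh k c a b d m Pt0 q r s t :
  d_r (pressure rho0 g f fh k c a b d m Pt0) q r s t = 0.
Proof. unfold d_r, pressure, theta. solve_closed_derive. Qed.

Lemma d_s_pressure rho0 g f fh k c a b d m Pt0 q r s t :
  d_s (pressure rho0 g f fh k c a b d m Pt0) q r s t =
  rho0 * m * (- k^2 * c^2 * b^2 + fh * k * c * a * b - f * k * c * b * d)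
    * exp (- (2 * m * s))
  + rho0 * m * (c * a * fh - c * d * f - k * c^2 * b - a * g)
    * exp (- (m * s)) * cos (theta k c q t)
  - rho0 * g.
Proof. unfold d_s, pressure, theta. apply is_derive_unique; auto_derive; auto; field. Qed.

Lemma linear3_homogeneous_eq0 (a11 a12 a13 a21 a22 a23 a31 a32 a33 x y z : R) :
  a11 * (a22 * a33 - a23 * a32) - a12 * (a21 * a33 - a23 * a31)
    + a13 * (a21 * a32 - a22 * a31) <> 0 ->
  x * a11 + y * a21 + z * a31 = 0 ->
  x * a12 + y * a22 + z * a32 = 0 ->
  x * a13 + y * a23 + z * a33 = 0 ->
  x = 0 /\ y = 0 /\ z = 0.
Proof.
  set (D := a11 * (a22 * a33 - a23 * a32) - a12 * (a21 * a33 - a23 * a31)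
            + a13 * (a21 * a32 - a22 * a31)).
  intros HD E1 E2 E3.
  assert (Hx : x * D = (a22 * a33 - a23 * a32) * (x * a11 + y * a21 + z * a31)
                      - (a21 * a33 - a23 * a31) * (x * a12 + y * a22 + z * a32)
                      + (a21 * a32 - a22 * a31) * (x * a13 + y * a23 + z * a33))
    by (unfold D; ring).
  assert (Hy : y * D = - (a12 * a33 - a13 * a32) * (x * a11 + y * a21 + z * a31)
                      + (a11 * a33 - a13 * a31) * (x * a12 + y * a22 + z * a32)
                      - (a11 * a32 - a12 * a31) * (x * a13 + y * a23 + z * a33))
    by (unfold D; ring).
  assert (Hz : z * D = (a12 * a23 - a13 * a22) * (x * a11 + y * a21 + z * a31)
                      - (a11 * a23 - a13 * a21) * (x * a12 + y * a22 + z * a32)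
                      + (a11 * a22 - a12 * a21) * (x * a13 + y * a23 + z * a33))
    by (unfold D; ring).
  rewrite E1, E2, E3 in Hx, Hy, Hz.
  repeat split; [apply (Rmult_eq_reg_r D) | apply (Rmult_eq_reg_r D)
                | apply (Rmult_eq_reg_r D)]; lra.
Qed.

Lemma eulerian_gradient_unique P X Y Z q r s t Gx Gy Gz Hx Hy Hz :
  jacobian3 X Y Z q r s t <> 0 ->
  eulerian_gradient P X Y Z q r s t Gx Gy Gz ->
  eulerian_gradient P X Y Z q r s t Hx Hy Hz ->
  Gx = Hx /\ Gy = Hy /\ Gz = Hz.
Proof.
  unfold jacobian3, eulerian_gradient. intros HJ [G1 [G2 G3]] [H1 [H2 H3]].
  destruct (linear3_homogeneous_eq0 _ _ _ _ _ _ _ _ _ (Gx - Hx) (Gy - Hy) (Gz - Hz) HJ)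
    as [Ex [Ey Ez]]; lra.
Qed.

Lemma is_derive_comp_xyt (eta etax etay etat : R -> R -> R -> R) (X Y : R -> R) t X' Y' :
  filterdiff (fun p : R * R * R => eta (fst (fst p)) (snd (fst p)) (snd p))
    (locally (X t, Y t, t))
    (fun h : R * R * R => etax (X t) (Y t) t * fst (fst h) + etay (X t) (Y t) t * snd (fst h)
                          + etat (X t) (Y t) t * snd h) ->
  is_derive X t X' -> is_derive Y t Y' ->
  is_derive (fun t' => eta (X t') (Y t') t') t
    (etat (X t) (Y t) t + X' * etax (X t) (Y t) t + Y' * etay (X t) (Y t) t).
Proof.
  intros Hdiff HX HY.
  assert (Hpair : filterdiff (fun t' => ((X t', Y t'), t')) (locally t)
                    (fun h => ((scal h X', scal h Y'), h))).
  { apply (filterdiff_comp'_2 (fun t' => (X t', Y t')) (fun t' => t') (fun p h => (p, h)));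
      [| apply filterdiff_linear, is_linear_id |].
    - apply (filterdiff_comp'_2 X Y (fun x y => (x, y))); auto.
      apply filterdiff_linear, is_linear_prod; [apply is_linear_fst | apply is_linear_snd].
    - apply filterdiff_linear, is_linear_prod; [apply is_linear_fst | apply is_linear_snd]. }
  eapply filterdiff_ext_lin; [exact (filterdiff_comp' _ _ t _ _ Hpair Hdiff) |].
  intro h. simpl. unfold scal; simpl. unfold mult; simpl. ring.
Qed.

Lemma kinematic_condition (X Y Z : R -> R -> R -> R -> R) (eta etax etay etat : R -> R -> R -> R)
    q r s t :
  let x := X q r s t in let y := Y q r s t in
  filterdiff (fun p : R * R * R => eta (fst (fst p)) (snd (fst p)) (snd p))
    (locally (x, y, t))
    (fun h : R * R * R => etax x y t * fst (fst h) + etay x y t * snd (fst h)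
                          + etat x y t * snd h) ->
  ex_derive (fun t' => X q r s t') t -> ex_derive (fun t' => Y q r s t') t ->
  (forall t', Z q r s t' = eta (X q r s t') (Y q r s t') t') ->
  DDt Z q r s t = etat x y t + DDt X q r s t * etax x y t + DDt Y q r s t * etay x y t.
Proof.
  intros x y Hdiff HX HY HZ.
  unfold DDt. rewrite (Derive_ext _ _ _ HZ).
  apply is_derive_unique, is_derive_comp_xyt; auto; apply Derive_correct; auto.
Qed.

Lemma jacobian_decay_pos (A m s1 s : R) :
  0 < m -> A * exp (- (2 * m * s1)) < 1 -> s1 <= s -> 0 <= A ->
  0 < 1 - A * exp (- (2 * m * s)).
Proof.
  intros Hm Hs1 Hs HA.
  assert (exp (- (2 * m * s)) <= exp (- (2 * m * s1))).
  { destruct (Req_dec s s1) as [-> | Hne]; [lra |].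
    left. apply exp_increasing. nra. }
  nra.
Qed.

Section GerstnerRelations.

Variables (f k c m a b d : R).
Hypotheses (Hk : k <> 0) (Hc : c <> 0) (Hm2 : m^2 * (k^2 * c^2 - f^2) = k^4 * c^2)
  (Hb : b = m * a / k) (Hd : d = - (f * m * a) / (k^2 * c)).

Lemma gerstner_kb : k * b = m * a.
Proof. rewrite Hb. field. auto. Qed.

Lemma gerstner_rotation : k * c * d + b * f = 0.
Proof. rewrite Hb, Hd. field. auto. Qed.

Lemma gerstner_b_sq : b^2 = a^2 + d^2.
Proof.
  assert (E : b^2 - a^2 - d^2 = a^2 * (m^2 * (k^2 * c^2 - f^2) - k^4 * c^2) / (k^4 * c^2))
    by (rewrite Hb, Hd; field; auto).
  rewrite Hm2, Rminus_diag, Rmult_0_r, Rdiv_0_l in E. lra.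
Qed.

Lemma gerstner_vertical : m * k * c^2 * b + m * c * d * f = k^2 * c^2 * a.
Proof.
  assert (E : m * k * c^2 * b + m * c * d * f - k^2 * c^2 * a
              = a * (m^2 * (k^2 * c^2 - f^2) - k^4 * c^2) / k^2)
    by (rewrite Hb, Hd; field; auto).
  rewrite Hm2, Rminus_diag, Rmult_0_r, Rdiv_0_l in E. lra.
Qed.

End GerstnerRelations.

Section GerstnerFlow.

Variables (rho0 g f fh k c m a b d : R).
Hypotheses (Hkb : k * b = m * a) (Hrot : k * c * d + b * f = 0) (Hbsq : b^2 = a^2 + d^2)
  (Hvert : m * k * c^2 * b + m * c * d * f = k^2 * c^2 * a).

Lemma jacobian_gerstner q r s t :
  jacobian3 (xpos k c m b) (ypos k c m d) (zpos k c m a) q r s t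
  = 1 - m^2 * a^2 * exp (- (2 * m * s)).
Proof.
  unfold jacobian3.
  rewrite d_q_xpos, d_r_xpos, d_s_xpos, d_q_ypos, d_r_ypos, d_s_ypos,
    d_q_zpos, d_r_zpos, d_s_zpos, exp_double.
  pose proof (sin_cos_sq (theta k c q t)) as HSC.
  set (E := exp (- (m * s))) in *.
  set (S := sin (theta k c q t)) in *. set (C := cos (theta k c q t)) in *.
  (* The identity is a linear combination of these vanishing multiples of the relations. *)
  assert (Zkb : E * C * (k * b - m * a) = 0) by (rewrite Hkb; ring).
  assert (Ztrig : a * m * E * E * b * k * (S^2 + C^2 - 1) = 0) by (rewrite HSC; ring).
  assert (Zkb' : a * m * E * E * (k * b - m * a) = 0) by (rewrite Hkb; ring).
  lra.
Qed.

Lemma gerstner_pressure_gradient Pt0 q r s t :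
  let E := exp (- (m * s)) in
  let S := sin (theta k c q t) in let C := cos (theta k c q t) in
  eulerian_gradient (pressure rho0 g f fh k c a b d m Pt0)
    (xpos k c m b) (ypos k c m d) (zpos k c m a) q r s t
    (- rho0 * E * S * (k^2 * c^2 * b - fh * k * c * a + f * k * c * d))
    0
    (- rho0 * (k^2 * c^2 * a * E * C - fh * k * c * b * E * C + g)).
Proof.
  intros E S C. unfold eulerian_gradient.
  rewrite d_q_pressure, d_r_pressure, d_s_pressure, d_q_xpos, d_r_xpos, d_s_xpos,
    d_q_ypos, d_r_ypos, d_s_ypos, d_q_zpos, d_r_zpos, d_s_zpos, exp_double.
  fold E S C. pose proof (sin_cos_sq (theta k c q t)) as HSC. fold S C in HSC.
  split; [| split]; [| ring |].
  - assert (Zbsq : rho0 * E * S * E * C * k^3 * c^2 * (b^2 - a^2 - d^2) = 0)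
      by (rewrite Hbsq; ring).
    assert (Zrot : rho0 * E * S * E * C * k^2 * c * d * (k * c * d + b * f) = 0)
      by (rewrite Hrot; ring).
    assert (Zkb : rho0 * E * S * E * C * fh * k * c * a * (k * b - m * a) = 0)
      by (rewrite Hkb; ring).
    lra.
  - assert (Zbsq : rho0 * E * E * C * C * m * k^2 * c^2 * (b^2 - a^2 - d^2) = 0)
      by (rewrite Hbsq; ring).
    assert (Zrot : rho0 * E * E * C * C * m * k * c * d * (k * c * d + b * f) = 0)
      by (rewrite Hrot; ring).
    assert (Zkb : rho0 * E * C * fh * c * (k * b - m * a) = 0) by (rewrite Hkb; ring).
    assert (Zkb' : rho0 * E * E * C * C * m * fh * c * a * (k * b - m * a) = 0)
      by (rewrite Hkb; ring).
    assert (Zvert : rho0 * E * C * (m * k * c^2 * b + m * c * d * f - k^2 * c^2 * a) = 0)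
      by (rewrite Hvert; ring).
    assert (Ztrig : rho0 * E * E * m * b * (k^2 * c^2 * b - fh * k * c * a + f * k * c * d)
                 * (S^2 + C^2 - 1) = 0)
      by (rewrite HSC; ring).
    lra.
Qed.

Lemma gerstner_euler Pt0 q r s t Px Py Pz :
  rho0 <> 0 ->
  jacobian3 (xpos k c m b) (ypos k c m d) (zpos k c m a) q r s t <> 0 ->
  eulerian_gradient (pressure rho0 g f fh k c a b d m Pt0)
    (xpos k c m b) (ypos k c m d) (zpos k c m a) q r s t Px Py Pz ->
  let u := DDt (xpos k c m b) in let v := DDt (ypos k c m d) in
  let w := DDt (zpos k c m a) in
  DDt u q r s t + fh * w q r s t - f * v q r s t = - (1 / rho0) * Px /\
  DDt v q r s t + f * u q r s t = - (1 / rho0) * Py /\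
  DDt w q r s t - fh * u q r s t = - (1 / rho0) * Pz - g.
Proof.
  intros Hrho0 HJ HP u v w.
  destruct (eulerian_gradient_unique _ _ _ _ _ _ _ _ _ _ _ _ _ _ HJ HP
              (gerstner_pressure_gradient Pt0 q r s t)) as [-> [-> ->]].
  unfold u, v, w.
  rewrite DDt2_xpos, DDt2_ypos, DDt2_zpos, DDt_xpos, DDt_ypos, DDt_zpos.
  split; [| split]; [field; auto | | field; auto].
  transitivity (k * c * exp (- (m * s)) * cos (theta k c q t) * (k * c * d + b * f));
    [ring | rewrite Hrot; ring].
Qed.

Lemma thermocline_pressure rhop s0 :
  rhop * g * a = rho0 * (k * c^2 * b + c * d * f - c * a * fh + a * g) ->
  forall P0, exists Pt0, forall q r t,
    pressure rho0 g f fh k c a b d m Pt0 q r s0 t = P0 - rhop * g * zpos k c m a q r s0 t.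
Proof.
  intros Hpc P0.
  exists (P0 - rhop * g * s0
          + rho0 * ((- (1/2) * k^2 * c^2 * b^2 + (1/2) * fh * k * c * a * b
                     - (1/2) * f * k * c * b * d) * exp (- (2 * m * s0)) + g * s0)).
  intros q r t. unfold pressure, zpos.
  set (E := exp (- (m * s0))). set (C := cos (theta k c q t)).
  assert (rhop * g * a * E * C
          = rho0 * (k * c^2 * b + c * d * f - c * a * fh + a * g) * E * C)
    by (rewrite Hpc; ring).
  lra.
Qed.

Lemma gerstner_dispersion rhop :
  rho0 <> 0 -> a <> 0 -> m <> 0 -> m^2 * (k^2 * c^2 - f^2) = k^4 * c^2 ->
  rhop * g * a = rho0 * (k * c^2 * b + c * d * f - c * a * fh + a * g) ->
  c^2 * (c^2 * k^2 - f^2) = (c * fh + g * (rhop - rho0) / rho0)^2.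
Proof.
  intros Hrho0 Ha Hm Hm2 Hpc.
  assert (Hphase : c * fh + g * (rhop - rho0) / rho0 = k^2 * c^2 / m).
  { apply (Rmult_eq_reg_r (rho0 * a * m)); [| repeat apply Rmult_integral_contrapositive; auto].
    transitivity (m * (c * fh * rho0 * a + rhop * g * a - rho0 * g * a)); [field; auto |].
    rewrite Hpc.
    transitivity (rho0 * (m * k * c^2 * b + m * c * d * f)); [ring |].
    rewrite Hvert. field. auto. }
  rewrite Hphase.
  apply (Rmult_eq_reg_r (m^2)); [| apply pow_nonzero; auto].
  transitivity (c^2 * (m^2 * (k^2 * c^2 - f^2))); [ring |].
  rewrite Hm2. field. auto.
Qed.

End GerstnerFlow.

Theorem mainTheorem1
  (g rho0 rhop f fh k a r0 c m b d sstar s0 splus : R)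
  (Hg : 0 < g) (Hrho0 : 0 < rho0) (Hrho : rho0 < rhop)
  (Hk : 0 < k) (Ha : 0 < a) (Hr0 : 0 < r0)
  (Hc : c <> 0) (Hkc : k^2 * c^2 > f^2)
  (Hm : 0 < m) (Hm2 : m^2 = k^4 * c^2 / (k^2 * c^2 - f^2))
  (Hb : b = m * a / k) (Hd : d = - (f * m * a) / (k^2 * c))
  (Hsstar : 0 < sstar) (Hsmall : m^2 * a^2 * exp (- (2 * m * sstar)) < 1)
  (Hs0 : sstar <= s0) (Hs0p : s0 < splus) :
  let X := xpos k c m b in
  let Y := ypos k c m d in
  let Z := zpos k c m a in
  let u := DDt X in
  let v := DDt Y in
  let w := DDt Z in
  (* (i) Jacobian: equal to 1 - m^2 a^2 e^{-2ms} (independent of t) and nonzero *)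
  (forall q r s t, Rabs r <= r0 -> s0 <= s <= splus ->
     jacobian3 X Y Z q r s t = 1 - m^2 * a^2 * exp (- (2 * m * s)) /\
     jacobian3 X Y Z q r s t <> 0)
  /\
  (* (ii) velocity field and the f-plane Euler equations *)
  (forall q r s t, Rabs r <= r0 -> s0 <= s <= splus ->
     u q r s t = k * c * b * exp (- (m * s)) * cos (theta k c q t) /\
     v q r s t = - k * c * d * exp (- (m * s)) * sin (theta k c q t) /\
     w q r s t = - k * c * a * exp (- (m * s)) * sin (theta k c q t))
  /\
  (forall Pt0 q r s t Px Py Pz, Rabs r <= r0 -> s0 <= s <= splus ->
     eulerian_gradient (pressure rho0 g f fh k c a b d m Pt0) X Y Z q r s t Px Py Pz ->
     DDt u q r s t + fh * w q r s t - f * v q r s t = - (1 / rho0) * Px /\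
     DDt v q r s t + f * u q r s t = - (1 / rho0) * Py /\
     DDt w q r s t - fh * u q r s t = - (1 / rho0) * Pz - g)
  /\
  (* (iii) pressure continuity at the thermocline s = s0 *)
  (rhop * g * a = rho0 * (k * c^2 * b + c * d * f - c * a * fh + a * g) ->
     (forall P0 : R, exists Pt0 : R,
        forall q r t, Rabs r <= r0 ->
          pressure rho0 g f fh k c a b d m Pt0 q r s0 t = P0 - rhop * g * Z q r s0 t)
     /\
     (* the surface s = s0 is material: for any differentiable eta whose graph
        z = eta(x,y,t) is the surface s = s0, the kinematic condition holds *)
     (forall (eta etax etay etat : R -> R -> R -> R),
        (forall x y t, filterdiff (fun p : R * R * R => eta (fst (fst p)) (snd (fst p)) (snd p))
             (locally (x, y, t))
             (fun h : R * R * R => etax x y t * fst (fst h) + etay x y t * snd (fst h)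
                                   + etat x y t * snd h)) ->
        (forall q r t, Rabs r <= r0 -> Z q r s0 t = eta (X q r s0 t) (Y q r s0 t) t) ->
        forall q r t, Rabs r <= r0 ->
          w q r s0 t = etat (X q r s0 t) (Y q r s0 t) t
                       + u q r s0 t * etax (X q r s0 t) (Y q r s0 t) t
                       + v q r s0 t * etay (X q r s0 t) (Y q r s0 t) t)
     /\
     (* dispersion relation *)
     c^2 * (c^2 * k^2 - f^2) = (c * fh + g * (rhop - rho0) / rho0)^2).
Proof.
  intros X Y Z u v w.
  assert (Hk0 : k <> 0) by lra.
  assert (Hm2' : m^2 * (k^2 * c^2 - f^2) = k^4 * c^2) by (rewrite Hm2; field; lra).
  pose proof (gerstner_kb _ _ _ _ Hk0 Hb) as Hkb.
  pose proof (gerstner_rotation f k c m a b d Hk0 Hc Hb Hd) as Hrot.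
  pose proof (gerstner_b_sq f k c m a b d Hk0 Hc Hm2' Hb Hd) as Hbsq.
  pose proof (gerstner_vertical f k c m a b d Hk0 Hc Hm2' Hb Hd) as Hvert.
  assert (Hjac : forall q r s t, s0 <= s -> jacobian3 X Y Z q r s t <> 0).
  { intros q r s t Hs. unfold X, Y, Z. rewrite jacobian_gerstner by exact Hkb.
    apply Rgt_not_eq, (jacobian_decay_pos _ m sstar); nra. }
  split; [| split; [| split]].
  - intros q r s t _ [Hs _]. split; [apply jacobian_gerstner, Hkb | auto].
  - intros q r s t _ _. unfold u, v, w, X, Y, Z.
    rewrite DDt_xpos, DDt_ypos, DDt_zpos. auto.
  - intros Pt0 q r s t Px Py Pz _ [Hs _].
    apply gerstner_euler; auto; lra.
  - intros Hpc. split; [| split].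
    + intros P0. destruct (thermocline_pressure rho0 g f fh k c m a b d rhop s0 Hpc P0)
        as [Pt0 HP]. exists Pt0. auto.
    + intros eta etax etay etat Hdiff HZ q r t Hr.
      apply (kinematic_condition X Y Z eta); [apply Hdiff | | | intro; apply HZ, Hr];
        unfold X, Y, xpos, ypos, theta; auto_derive; auto.
    + apply (gerstner_dispersion rho0 g f fh k c m a b d Hvert); auto; lra.
Qed.
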